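(* Let $q\ge 3$, $s\in\mathbb{N}$, and let $Y_s=\{y_i\}_{i=1}^{2s}$ be any collection of points with $y_{2s}<\cdots<y_1<y_{2s}+2\pi=:y_0$. Then there exists a function $f\in\Delta^{(q)}(Y_s)\cap W^{q-2}$ such that $$E_n^{(q)}(f,Y_s)\ge C(q,Y_s),\qquad n\in\mathbb{N},$$ where $C(q,Y_s)>0$ depends only on $q$ and $Y_s$.
   Context: A function $f\in C[a,b]$ is called $q$-monotone ($q\ge 2$) if $f\in C^{q-2}(a,b)$ and $f^{(q-2)}$ is convex on $(a,b)$. For $Y_s$ as in the claim, $\Delta^{(q)}(Y_s)$ denotes the set of continuous $2\pi$-periodic functions $f:\mathbb{R}\to\mathbb{R}$ such that $(-1)^{i-1}f$ is $q$-monotone on $[y_i,y_{i-1}]$ for each $1\le i\le 2s$. For $r\in\mathbb{N}$, $W^r$ denotes the class of $2\pi$-periodic functions $f$ with $f^{(r-1)}$ locally absolutely continuous on $\mathbb{R}$ and $\operatorname{ess\,sup}_{x\in\mathbb{R}}|f^{(r)}(x)|\le 2$. $\mathcal{T}_n$ is the space of real trigonometric polynomials of degree $\le n$. For a continuous $2\pi$-periodic $g$, $\|g\|=\max_{x\in\mathbb{R}}|g(x)|$, and $E_n^{(q)}(g,Y_s):=\inf_{T_n\in\mathcal{T}_n\cap\Delta^{(q)}(Y_s)}\|g-T_n\|$. *)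

From Stdlib Require Import Reals Lra Lia.
From Coquelicot Require Import Coquelicot.
Open Scope R_scope.

Definition periodic_cont (f : R -> R) : Prop :=
  (forall x, continuous f x) /\ (forall x, f (x + 2 * PI) = f x).

Definition cont_on_closed (f : R -> R) (a b : R) : Prop :=
  forall x, a <= x <= b ->
    filterlim f (within (fun t => a <= t <= b) (locally x)) (locally (f x)).

Definition Cm_open (m : nat) (f : R -> R) (a b : R) : Prop :=
  forall k, (k <= m)%nat -> forall x, a < x < b ->
    ex_derive_n f k x /\ continuous (Derive_n f k) x.

Definition convex_open (g : R -> R) (a b : R) : Prop :=
  forall x y t, a < x < b -> a < y < b -> 0 <= t <= 1 ->
    g (t * x + (1 - t) * y) <= t * g x + (1 - t) * g y.

Definition q_monotone (q : nat) (f : R -> R) (a b : R) : Prop :=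
  cont_on_closed f a b /\ Cm_open (q - 2) f a b /\
  convex_open (Derive_n f (q - 2)) a b.

(* The points y_1, ..., y_{2s} are given by y : nat -> R (indices 1..2s used);
   y_0 := y_{2s} + 2 pi. *)
Definition yext (s : nat) (y : nat -> R) (i : nat) : R :=
  if Nat.eqb i 0 then y (2 * s)%nat + 2 * PI else y i.

Definition admissible_Y (s : nat) (y : nat -> R) : Prop :=
  forall i, (1 <= i <= 2 * s)%nat -> yext s y i < yext s y (i - 1).

Definition Delta_q (q s : nat) (y : nat -> R) (f : R -> R) : Prop :=
  periodic_cont f /\
  forall i, (1 <= i <= 2 * s)%nat ->
    q_monotone q (fun x => (-1) ^ (i - 1) * f x) (yext s y i) (yext s y (i - 1)).

Definition null_set (N : R -> Prop) : Prop :=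
  forall eps, 0 < eps -> exists a b : nat -> R,
    (forall n, a n <= b n) /\
    (forall x, N x -> exists n, a n < x < b n) /\
    (forall m, sum_f_R0 (fun n => b n - a n) m <= eps).

Definition loc_abs_continuous (g : R -> R) : Prop :=
  forall c d, c <= d -> forall eps, 0 < eps -> exists delta, 0 < delta /\
    forall (m : nat) (a b : nat -> R), (1 <= m)%nat ->
      (forall i, (i < m)%nat -> c <= a i /\ a i <= b i /\ b i <= d) ->
      (forall i j, (i < m)%nat -> (j < m)%nat -> i <> j ->
          b i <= a j \/ b j <= a i) ->
      sum_f_R0 (fun i => b i - a i) (m - 1) < delta ->
      sum_f_R0 (fun i => Rabs (g (b i) - g (a i))) (m - 1) < eps.

Definition W_class (r : nat) (f : R -> R) : Prop :=
  (forall x, f (x + 2 * PI) = f x) /\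
  (forall k, (k <= r - 1)%nat -> forall x, ex_derive_n f k x) /\
  loc_abs_continuous (Derive_n f (r - 1)) /\
  exists N : R -> Prop, null_set N /\
    forall x, ~ N x -> ex_derive (Derive_n f (r - 1)) x /\
                       Rabs (Derive (Derive_n f (r - 1)) x) <= 2.

Definition trig_poly (n : nat) (T : R -> R) : Prop :=
  exists a b : nat -> R, forall x,
    T x = sum_f_R0 (fun k => a k * cos (INR k * x) + b k * sin (INR k * x)) n.

Definition sup_norm (g : R -> R) : Rbar :=
  Lub_Rbar (fun r => exists x, r = Rabs (g x)).

Definition E_nq (n q s : nat) (y : nat -> R) (g : R -> R) : Rbar :=
  Glb_Rbar (fun r => exists T, trig_poly n T /\ Delta_q q s y T /\
                               sup_norm (fun x => g x - T x) = Finite r).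

From Stdlib Require Import Reals Lra Lia ZArith.
From Coquelicot Require Import Coquelicot.
Open Scope R_scope.

(* The extremal function is f = -(1/2) B, where B is the 2 pi-periodic Bernoulli spline of
   degree q - 1 with one knot per period, placed at y_1. On each period f^(q-2) is affine,
   so +-f is q-monotone on every [y_i, y_(i-1)], while f^(q-2) jumps up by pi at y_1.
   If T is in Delta^(q)(Y_s), then T^(q-2) is concave on [y_2, y_1] and convex on
   [y_1, y_0], so T^(q-1) first decreases and then increases: the (q-1)-st forward
   difference of T with a small step h over a window straddling y_1 is at most the one
   over an adjacent window. For f the straddling difference exceeds both neighbours by
   G = pi (h/2)^(q-2) / (q-2)!, and a (q-1)-st difference is at most 2^(q-1) times the sup
   norm; hence ||f - T|| >= G / 2^q for every n. *)

(** * Forward differences *)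

Definition fdiff1 (h : R) (F : R -> R) (x : R) : R := F (x + h) - F x.

Fixpoint fdiff (h : R) (k : nat) (F : R -> R) : R -> R :=
  match k with O => F | S k => fdiff h k (fdiff1 h F) end.

Lemma fdiff_ext_nodes k h F G x :
  (forall j, (j <= k)%nat -> F (x + INR j * h) = G (x + INR j * h)) ->
  fdiff h k F x = fdiff h k G x.
Proof.
  revert F G; induction k as [|k IH]; intros F G H; simpl.
  - specialize (H 0%nat (le_n _)). simpl in H. rewrite Rmult_0_l, Rplus_0_r in H. exact H.
  - apply IH. intros j Hj. unfold fdiff1.
    replace (x + INR j * h + h) with (x + INR (S j) * h) by (rewrite S_INR; ring).
    rewrite (H (S j)), (H j) by lia. reflexivity.
Qed.

Lemma fdiff_ext k h (F G : R -> R) x : (forall z, F z = G z) -> fdiff h k F x = fdiff h k G x.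
Proof. intro E. apply fdiff_ext_nodes. intros j _. apply E. Qed.

Lemma fdiff_plus_scal k h F G c x :
  fdiff h k (fun z => F z + c * G z) x = fdiff h k F x + c * fdiff h k G x.
Proof.
  revert F G; induction k as [|k IH]; intros F G; simpl; [reflexivity|].
  rewrite <- IH. apply fdiff_ext_nodes. intros j _. unfold fdiff1. ring.
Qed.

Lemma fdiff_abs_le k h F e x :
  (forall z, Rabs (F z) <= e) -> Rabs (fdiff h k F x) <= 2 ^ k * e.
Proof.
  revert F e; induction k as [|k IH]; intros F e HF; simpl.
  - rewrite Rmult_1_l. apply HF.
  - replace (2 * 2 ^ k * e) with (2 ^ k * (2 * e)) by ring.
    apply IH. intro z. unfold fdiff1.
    eapply Rle_trans; [apply Rabs_triang|]. rewrite Rabs_Ropp.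
    pose proof (HF (z + h)). pose proof (HF z). lra.
Qed.

Lemma fdiff_vanishing_nodes k h F x :
  (forall j, (j < k)%nat -> F (x + INR j * h) = 0) ->
  fdiff h k F x = F (x + INR k * h).
Proof.
  revert F; induction k as [|k IH]; intros F HF; simpl.
  - rewrite Rmult_0_l, Rplus_0_r. reflexivity.
  - assert (Hnodes : forall j, x + INR j * h + h = x + INR (S j) * h)
      by (intro j; rewrite S_INR; ring).
    rewrite IH.
    + unfold fdiff1. rewrite Hnodes, (HF k), Rminus_0_r by lia. reflexivity.
    + intros j Hj. unfold fdiff1. rewrite Hnodes, (HF (S j)), (HF j) by lia. ring.
Qed.

Lemma node_bounds x h j M : 0 < h -> (j <= M)%nat -> x <= x + INR j * h <= x + INR M * h.
Proof. intros Hh Hj. pose proof (pos_INR j). pose proof (le_INR _ _ Hj). nra. Qed.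

(** * Derivative chains, monotonicity and convexity *)

Definition deriv_chain (Fs : nat -> R -> R) : Prop :=
  forall j x, is_derive (Fs j) x (Fs (S j) x).

Lemma is_derive_shift (F : R -> R) h x l :
  is_derive F (x + h) l -> is_derive (fun z => F (z + h)) x l.
Proof.
  intro HF. rewrite <- (scal_one l).
  apply (is_derive_comp F (fun z => z + h)); [exact HF|].
  auto_derive; [exact I | reflexivity].
Qed.

Lemma deriv_chain_scal_shift (Fs : nat -> R -> R) a b :
  deriv_chain Fs -> deriv_chain (fun j x => a * Fs j (x + b)).
Proof.
  intros HF j x. apply is_derive_scal, is_derive_shift, HF.
Qed.

Lemma deriv_chain_Derive_n Fs k x :
  deriv_chain Fs -> Derive_n (Fs 0%nat) k x = Fs k x.
Proof.
  intro HF. revert x; induction k as [|k IH]; intro x; simpl; [reflexivity|].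
  rewrite (Derive_ext _ (Fs k) x IH). apply is_derive_unique, HF.
Qed.

Lemma fdiff_mean_value k h Fs x :
  deriv_chain Fs -> 0 < h ->
  exists xi, x <= xi <= x + INR k * h /\ fdiff h k (Fs 0%nat) x = h ^ k * Fs k xi.
Proof.
  revert Fs; induction k as [|k IH]; intros Fs HF Hh.
  - exists x. simpl. split; [lra | ring].
  - set (Gs := fun j z => Fs j (z + h) - Fs j z).
    assert (HG : deriv_chain Gs).
    { intros j z. apply (is_derive_minus (fun z => Fs j (z + h)) (Fs j)).
      - apply is_derive_shift, HF.
      - apply HF. }
    destruct (IH Gs HG Hh) as [xi [Hxi Heq]].
    destruct (MVT_cor2 (Fs k) (Fs (S k)) xi (xi + h)) as [c [Hc1 Hc2]]; [lra| |].
    { intros c _. apply is_derive_Reals, HF. }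
    exists c. split.
    + rewrite S_INR. nra.
    + simpl. change (fdiff h k (Gs 0%nat) x = h * h ^ k * Fs (S k) c).
      rewrite Heq. unfold Gs. rewrite Hc1. ring.
Qed.

Lemma nondecreasing_of_derive_nonneg (F F' : R -> R) a b u v :
  (forall x, is_derive F x (F' x)) -> (forall z, a < z < b -> 0 <= F' z) ->
  a <= u -> u <= v -> v <= b -> F u <= F v.
Proof.
  intros HF Hpos Hu Huv Hv.
  destruct (Req_dec u v) as [<-|Hne]; [lra|].
  destruct (MVT_cor2 F F' u v) as [c [Hc1 Hc2]]; [lra| |].
  { intros c _. apply is_derive_Reals, HF. }
  assert (0 <= F' c) by (apply Hpos; lra).
  assert (0 <= F' c * (v - u)) by (apply Rmult_le_pos; lra). lra.
Qed.

(* The second difference at step h equals h^2 F''(xi) for some xi within h of x,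
   so a negative F''(x) would contradict midpoint convexity. *)
Lemma convex_open_second_derivative_nonneg Fs a b x :
  deriv_chain Fs -> convex_open (Fs 0%nat) a b -> a < x < b -> 0 <= Fs 2%nat x.
Proof.
  intros HF Hconv Hx.
  destruct (Rle_or_lt 0 (Fs 2%nat x)) as [Hnn|Hneg]; [exact Hnn|exfalso].
  assert (Hcont : continuous (Fs 2%nat) x)
    by (apply (ex_derive_continuous (Fs 2%nat)); eexists; apply HF).
  assert (Heps : 0 < - Fs 2%nat x / 2) by lra.
  destruct (proj1 (filterlim_locally (Fs 2%nat) (Fs 2%nat x)) Hcont (mkposreal _ Heps))
    as [d Hd].
  set (h := Rmin d (Rmin (x - a) (b - x)) / 2).
  assert (Hh : 0 < h /\ h < d /\ h < x - a /\ h < b - x).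
  { pose proof (cond_pos d).
    pose proof (Rmin_l d (Rmin (x - a) (b - x))). pose proof (Rmin_r d (Rmin (x - a) (b - x))).
    pose proof (Rmin_l (x - a) (b - x)). pose proof (Rmin_r (x - a) (b - x)).
    assert (0 < Rmin d (Rmin (x - a) (b - x)))
      by (apply Rmin_case; [lra | apply Rmin_case; lra]).
    unfold h; lra. }
  destruct (fdiff_mean_value 2 h Fs (x - h) HF ltac:(lra)) as [xi [Hxi Heq]].
  simpl in Heq, Hxi. unfold fdiff1 in Heq.
  replace (x - h + h + h) with (x + h) in Heq by ring.
  replace (x - h + h) with x in Heq by ring.
  assert (Hmid : Fs 0%nat x <= 1 / 2 * Fs 0%nat (x - h) + (1 - 1 / 2) * Fs 0%nat (x + h)).
  { replace x with (1 / 2 * (x - h) + (1 - 1 / 2) * (x + h)) at 1 by field.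
    apply Hconv; lra. }
  assert (Hxi_neg : Fs 2%nat xi < 0).
  { assert (Hball : ball x d xi).
    { change (Rabs (xi - x) < d). apply Rabs_def1; lra. }
    specialize (Hd xi Hball). change (Rabs (Fs 2%nat xi - Fs 2%nat x) < - Fs 2%nat x / 2) in Hd.
    apply Rabs_def2 in Hd. lra. }
  assert (Hhh : 0 < h * (h * 1)) by nra.
  pose proof (Rmult_lt_compat_l _ _ _ Hhh Hxi_neg). lra.
Qed.

Lemma convex_open_ext (F G : R -> R) a b :
  (forall z, F z = G z) -> convex_open F a b -> convex_open G a b.
Proof. intros E HF x y t Hx Hy Ht. rewrite <- !E. apply HF; assumption. Qed.

Lemma convex_open_affine (g : R -> R) al be a b :
  (forall z, a < z < b -> g z = al * z + be) -> convex_open g a b.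
Proof.
  intros Hg x y t Hx Hy Ht.
  assert (a < t * x + (1 - t) * y < b).
  { split; destruct (Rle_or_lt x y); nra. }
  rewrite !Hg by assumption. right. ring.
Qed.

Lemma deriv_chain_derive_nonneg_of_convex m Fs a b :
  deriv_chain Fs -> convex_open (Fs m) a b ->
  forall z, a < z < b -> 0 <= Fs (S (S m)) z.
Proof.
  intros HF Hconv z Hz.
  apply (convex_open_second_derivative_nonneg (fun j => Fs (j + m)%nat) a b z);
    [intros j t; apply HF | exact Hconv | exact Hz].
Qed.

(* Concave-then-convex (m-th derivative) makes the (m+1)-st derivative unimodal with
   its minimum at c; a difference window containing c is therefore dominated by a
   neighbouring window on the side where the mean-value point falls. *)
Lemma fdiff_le_max_of_concave_convex m Fs a c b h x :
  deriv_chain Fs ->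
  convex_open (fun z => - Fs m z) a c -> convex_open (Fs m) c b -> 0 < h ->
  a <= x - INR (S m) * h -> x <= c -> c <= x + INR (S m) * h ->
  x + 2 * (INR (S m) * h) <= b ->
  fdiff h (S m) (Fs 0%nat) x <=
  Rmax (fdiff h (S m) (Fs 0%nat) (x - INR (S m) * h))
       (fdiff h (S m) (Fs 0%nat) (x + INR (S m) * h)).
Proof.
  intros HF Hconc Hconv Hh Ha Hxc Hcx Hb.
  set (w := INR (S m) * h) in *.
  assert (Hup : forall u v, c <= u -> u <= v -> v <= b -> Fs (S m) u <= Fs (S m) v).
  { intros u v. apply (nondecreasing_of_derive_nonneg _ (Fs (S (S m))) c b); [apply HF|].
    apply (deriv_chain_derive_nonneg_of_convex m Fs c b HF Hconv). }
  assert (Hdown : forall u v, a <= u -> u <= v -> v <= c -> Fs (S m) v <= Fs (S m) u).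
  { intros u v Hu Huv Hv.
    set (Ns := fun j z => - Fs j z).
    assert (HN : deriv_chain Ns) by (intros j z; apply (is_derive_opp (Fs j)), HF).
    enough (Ns (S m) u <= Ns (S m) v) by (unfold Ns in *; lra).
    apply (nondecreasing_of_derive_nonneg _ (Ns (S (S m))) a c); auto.
    apply (deriv_chain_derive_nonneg_of_convex m Ns a c HN Hconc). }
  destruct (fdiff_mean_value (S m) h Fs x HF Hh) as [xi [Hxi ->]].
  destruct (fdiff_mean_value (S m) h Fs (x - w) HF Hh) as [xl [Hxl ->]].
  destruct (fdiff_mean_value (S m) h Fs (x + w) HF Hh) as [xr [Hxr ->]].
  fold w in Hxi, Hxl, Hxr.
  assert (Hp : 0 < h ^ S m) by (apply pow_lt; exact Hh).
  destruct (Rle_or_lt xi c) as [Hle|Hgt].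
  - eapply Rle_trans; [|apply Rmax_l].
    apply Rmult_le_compat_l; [lra|]. apply Hdown; lra.
  - eapply Rle_trans; [|apply Rmax_r].
    apply Rmult_le_compat_l; [lra|]. apply Hup; lra.
Qed.

(** * Trigonometric polynomials *)

(* The j-th derivative of the k-th harmonic: each derivative multiplies by k and shifts
   the phase by pi/2. *)
Definition trig_term (a b : nat -> R) (j k : nat) (x : R) : R :=
  INR k ^ j * (a k * cos (INR k * x + INR j * (PI / 2))
               + b k * sin (INR k * x + INR j * (PI / 2))).

Definition trig_chain (a b : nat -> R) (n j : nat) (x : R) : R :=
  sum_f_R0 (fun k => trig_term a b j k x) n.

Lemma is_derive_sum_f_R0 (F F' : nat -> R -> R) n x :
  (forall k, is_derive (F k) x (F' k x)) ->
  is_derive (fun z => sum_f_R0 (fun k => F k z) n) x (sum_f_R0 (fun k => F' k x) n).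
Proof.
  intro HF. induction n as [|n IH]; simpl; [apply HF|].
  apply (is_derive_plus (fun z => sum_f_R0 (fun k => F k z) n) (F (S n))); [exact IH | apply HF].
Qed.

Lemma trig_chain_deriv_chain a b n : deriv_chain (trig_chain a b n).
Proof.
  intros j x. apply (is_derive_sum_f_R0 (trig_term a b j) (trig_term a b (S j))).
  intro k. unfold trig_term.
  set (u := INR k * x + INR j * (PI / 2)).
  replace (INR k * x + INR (S j) * (PI / 2)) with (u + PI / 2) by (unfold u; rewrite S_INR; ring).
  rewrite cos_plus, sin_plus, cos_PI2, sin_PI2.
  auto_derive; [exact I|]. fold u. simpl. ring.
Qed.

Lemma trig_poly_deriv_chain n T :
  trig_poly n T -> exists Ts, deriv_chain Ts /\ forall x, Ts 0%nat x = T x.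
Proof.
  intros [a [b HT]]. exists (trig_chain a b n). split; [apply trig_chain_deriv_chain|].
  intro x. rewrite HT. apply sum_eq. intros k _. unfold trig_term. simpl.
  rewrite !Rmult_0_l, !Rplus_0_r. ring.
Qed.

Lemma constant_of_derive_zero (F : R -> R) t :
  (forall x, is_derive F x 0) -> F t = F 0.
Proof.
  intro HF.
  assert (HF' : forall a b, a < b -> F b = F a).
  { intros a b Hab.
    destruct (MVT_cor2 F (fun _ => 0) a b Hab) as [c [Hc _]];
      [intros; apply is_derive_Reals, HF | lra]. }
  destruct (Rtotal_order t 0) as [Ht|[->|Ht]]; [symmetry| |]; auto.
Qed.

Lemma is_derive_RInt_upper (g : R -> R) a t :
  (forall z, continuous g z) -> is_derive (fun u => RInt g a u) t (g t).
Proof.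
  intro Hg. apply is_derive_RInt with (a := a); [|apply Hg].
  exists (mkposreal 1 Rlt_0_1). intros b _.
  apply RInt_correct, ex_RInt_continuous. intros; apply Hg.
Qed.

Lemma abs_sub_le_of_derive_bound (G G' : R -> R) a b K :
  (forall z, is_derive G z (G' z)) -> a <= b -> (forall z, a <= z <= b -> Rabs (G' z) <= K) ->
  Rabs (G b - G a) <= K * (b - a).
Proof.
  intros HG Hab HK.
  destruct (Req_dec a b) as [<-|Hne].
  { rewrite Rminus_diag, Rabs_R0. lra. }
  destruct (MVT_cor2 G G' a b) as [c [-> Hc]]; [lra | intros; apply is_derive_Reals, HG |].
  rewrite Rabs_mult, (Rabs_right (b - a)) by lra.
  apply Rmult_le_compat_r; [lra | apply HK; lra].
Qed.

Lemma is_derive_glue (g G1 G2 : R -> R) x l d :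
  0 < d -> (forall z, x - d < z < x -> g z = G1 z) -> (forall z, x <= z < x + d -> g z = G2 z) ->
  G1 x = g x -> is_derive G1 x l -> is_derive G2 x l -> is_derive g x l.
Proof.
  intros Hd H1 H2 E D1 D2.
  apply is_derive_Reals in D1. apply is_derive_Reals in D2. apply is_derive_Reals.
  intros eps He.
  destruct (D1 eps He) as [d1 Hd1]. destruct (D2 eps He) as [d2 Hd2].
  assert (Hm : 0 < Rmin d (Rmin d1 d2)).
  { pose proof (cond_pos d1). pose proof (cond_pos d2).
    apply Rmin_case; [lra | apply Rmin_case; lra]. }
  exists (mkposreal _ Hm). intros u Hu0 Hu. simpl in Hu.
  pose proof (Rmin_l d (Rmin d1 d2)). pose proof (Rmin_r d (Rmin d1 d2)).
  pose proof (Rmin_l d1 d2). pose proof (Rmin_r d1 d2).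
  apply Rabs_def2 in Hu as [Hu1 Hu2].
  destruct (Rlt_or_le u 0) as [Hneg|Hpos].
  - rewrite (H1 (x + u)), <- E by lra. apply Hd1; [exact Hu0 | apply Rabs_def1; lra].
  - rewrite (H2 (x + u)), (H2 x) by lra. apply Hd2; [exact Hu0 | apply Rabs_def1; lra].
Qed.

Lemma cont_on_closed_of_continuous (f : R -> R) a b :
  (forall x, continuous f x) -> cont_on_closed f a b.
Proof.
  intros Hf x _. apply (filterlim_filter_le_1 (F := locally x)); [apply filter_le_within | apply Hf].
Qed.

Lemma sum_f_R0_term_le (A : nat -> R) N i :
  (forall k, (k <= N)%nat -> 0 <= A k) -> (i <= N)%nat -> A i <= sum_f_R0 A N.
Proof.
  revert i; induction N as [|N IH]; intros i HA Hi; simpl.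
  - replace i with 0%nat by lia. lra.
  - assert (HSN : 0 <= A (S N)) by (apply HA; lia).
    assert (IH' : forall k, (k <= N)%nat -> A k <= sum_f_R0 A N)
      by (intros k Hk; apply IH; [intros; apply HA; lia | exact Hk]).
    destruct (Nat.eq_dec i (S N)) as [->|Hne].
    + assert (0 <= A 0%nat) by (apply HA; lia).
      pose proof (IH' 0%nat (Nat.le_0_l N)). lra.
    + pose proof (IH' i ltac:(lia)). lra.
Qed.

Section ShortLipschitz.

Variables (g : R -> R) (K L : R).
Hypothesis K_ge0 : 0 <= K.
Hypothesis L_gt0 : 0 < L.
Hypothesis g_lipschitz : forall a b, a <= b < a + L -> Rabs (g b - g a) <= K * (b - a).

Let delta_pos eps : 0 < eps -> 0 < Rmin L (eps / (K + 1)).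
Proof. intro He. apply Rmin_case; [lra | apply Rdiv_lt_0_compat; lra]. Qed.

Let K_delta_lt eps : 0 < eps -> K * Rmin L (eps / (K + 1)) < eps.
Proof.
  intro He. pose proof (Rmin_r L (eps / (K + 1))).
  apply (Rle_lt_trans _ (K * (eps / (K + 1)))); [apply Rmult_le_compat_l; lra|].
  apply (Rmult_lt_reg_r (K + 1)); [lra|].
  replace (K * (eps / (K + 1)) * (K + 1)) with (K * eps) by (field; lra). nra.
Qed.

Lemma continuous_of_lipschitz_short x : continuous g x.
Proof.
  apply filterlim_locally. intro eps. pose proof (cond_pos eps) as He.
  exists (mkposreal _ (delta_pos eps He)). intros z Hz.
  change (Rabs (z - x) < Rmin L (eps / (K + 1))) in Hz.
  change (Rabs (g z - g x) < eps).
  pose proof (Rmin_l L (eps / (K + 1))). pose proof (K_delta_lt eps He).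
  apply Rabs_def2 in Hz as [Hz1 Hz2].
  destruct (Rle_or_lt x z) as [Hxz|Hzx].
  - pose proof (g_lipschitz x z ltac:(lra)).
    assert (K * (z - x) <= K * Rmin L (eps / (K + 1))) by (apply Rmult_le_compat_l; lra). lra.
  - pose proof (g_lipschitz z x ltac:(lra)). rewrite Rabs_minus_sym.
    assert (K * (x - z) <= K * Rmin L (eps / (K + 1))) by (apply Rmult_le_compat_l; lra). lra.
Qed.

Lemma loc_abs_continuous_of_lipschitz_short : loc_abs_continuous g.
Proof.
  intros c d _ eps He.
  exists (Rmin L (eps / (K + 1))). split; [apply delta_pos, He|].
  intros m a b Hm Hab _ Hsum.
  pose proof (Rmin_l L (eps / (K + 1))). pose proof (K_delta_lt eps He).
  assert (Hlen : forall i, (i <= m - 1)%nat -> 0 <= b i - a i)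
    by (intros i Hi; destruct (Hab i ltac:(lia)); lra).
  eapply Rle_lt_trans.
  { apply (sum_Rle _ (fun i => K * (b i - a i))). intros i Hi.
    pose proof (sum_f_R0_term_le (fun i => b i - a i) (m - 1) i Hlen Hi).
    destruct (Hab i ltac:(lia)) as [Hc [Hab_i Hd]]. apply g_lipschitz. lra. }
  rewrite (sum_eq _ (fun i => (b i - a i) * K)) by (intros; ring).
  rewrite <- scal_sum.
  assert (K * sum_f_R0 (fun i => b i - a i) (m - 1) <= K * Rmin L (eps / (K + 1)))
    by (apply Rmult_le_compat_l; lra).
  lra.
Qed.

End ShortLipschitz.

(* The n-th point is covered by an interval of length (eps / 2) (1/2)^n. *)
Lemma null_set_of_sequence (N : R -> Prop) (u : nat -> R) :
  (forall x, N x -> exists n, x = u n) -> null_set N.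
Proof.
  intros HN eps He.
  set (r := fun n => eps / 4 * (1 / 2) ^ n).
  assert (Hr : forall n, 0 < r n) by (intro n; apply Rmult_lt_0_compat; [lra | apply pow_lt; lra]).
  exists (fun n => u n - r n), (fun n => u n + r n). split; [|split].
  - intro n. pose proof (Hr n). lra.
  - intros x Hx. destruct (HN x Hx) as [n ->]. exists n. pose proof (Hr n). lra.
  - intro m. rewrite (sum_eq _ (fun n => (1 / 2) ^ n * (eps / 2)))
      by (intros n _; unfold r; field).
    rewrite <- scal_sum, tech3 by lra.
    assert (0 < (1 / 2) ^ S m) by (apply pow_lt; lra).
    replace (eps / 2 * ((1 - (1 / 2) ^ S m) / (1 - 1 / 2))) with (eps - eps * (1 / 2) ^ S m)
      by field.
    nra.
Qed.

Definition int_of_nat (n : nat) : Z :=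
  if Nat.even n then Z.of_nat (Nat.div2 n) else (- Z.of_nat (Nat.div2 n) - 1)%Z.

Lemma int_of_nat_surj j : exists n, int_of_nat n = j.
Proof.
  destruct (Z_le_gt_dec 0 j) as [Hj|Hj].
  - exists (2 * Z.to_nat j)%nat. unfold int_of_nat.
    rewrite Nat.even_even, Nat.div2_double. lia.
  - exists (2 * Z.to_nat (- j - 1) + 1)%nat. unfold int_of_nat.
    rewrite Nat.even_odd, Nat.add_1_r, Nat.div2_succ_double. lia.
Qed.

(** * Bernoulli polynomials *)

(* bern m t = (2 pi)^m / m! * B_m (t / (2 pi)), where B_m is the m-th Bernoulli
   polynomial: bern (m+1)' = bern m, and bern (m+1) has zero mean on [0, 2 pi]. *)
Fixpoint bern (m : nat) : R -> R :=
  match m with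
  | O => fun _ => 1
  | S O => fun t => t - PI
  | S ((S _) as m') => fun t =>
      RInt (bern m') 0 t - RInt (fun u => RInt (bern m') 0 u) 0 (2 * PI) / (2 * PI)
  end.

Lemma bern_derive m t : is_derive (bern (S m)) t (bern m t).
Proof.
  revert t; induction m as [|m IH]; intro t.
  - simpl. auto_derive; [exact I | ring].
  - change (is_derive (fun t => RInt (bern (S m)) 0 t
              - RInt (fun u => RInt (bern (S m)) 0 u) 0 (2 * PI) / (2 * PI)) t (bern (S m) t)).
    set (C := RInt (fun u => RInt (bern (S m)) 0 u) 0 (2 * PI) / (2 * PI)).
    rewrite <- (Rminus_0_r (bern (S m) t)).
    apply (is_derive_minus (fun t => RInt (bern (S m)) 0 t) (fun _ => C));
      [|apply is_derive_Reals, derivable_pt_lim_const].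
    apply is_derive_RInt_upper. intro z.
    apply (ex_derive_continuous (bern (S m))). eexists. apply IH.
Qed.

Lemma bern_continuous m z : continuous (bern m) z.
Proof.
  destruct m as [|m]; [apply continuous_const|].
  apply (ex_derive_continuous (bern (S m))). eexists. apply bern_derive.
Qed.

Lemma bern_mean m : RInt (bern (S m)) 0 (2 * PI) = 0.
Proof.
  pose proof PI_RGT_0.
  destruct m as [|m].
  - assert (Hint : is_RInt (bern 1) 0 (2 * PI)
                       (minus ((2 * PI) * (2 * PI) / 2 - PI * (2 * PI)) (0 * 0 / 2 - PI * 0))).
    { apply (is_RInt_derive (fun t => t * t / 2 - PI * t)).
      - intros x _. auto_derive; [exact I | simpl; field].
      - intros x _. apply bern_continuous. }
    rewrite (is_RInt_unique _ _ _ _ Hint). unfold minus, plus, opp; simpl. field.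
  - change (RInt (fun t => RInt (bern (S m)) 0 t
              - RInt (fun u => RInt (bern (S m)) 0 u) 0 (2 * PI) / (2 * PI)) 0 (2 * PI) = 0).
    assert (Hc : forall z, continuous (fun t => RInt (bern (S m)) 0 t) z).
    { intro z. apply (ex_derive_continuous (fun t => RInt (bern (S m)) 0 t)). eexists.
      apply is_derive_RInt_upper, bern_continuous. }
    rewrite (RInt_minus (fun t => RInt (bern (S m)) 0 t) (fun _ => _)).
    + rewrite RInt_const. unfold minus, plus, opp, scal; simpl. unfold mult; simpl. field. lra.
    + apply ex_RInt_continuous. intros; apply Hc.
    + apply ex_RInt_continuous. intros; apply continuous_const.
Qed.

Lemma bern_periodic_ends m : bern (S (S m)) (2 * PI) = bern (S (S m)) 0.
Proof.
  change (RInt (bern (S m)) 0 (2 * PI) - RInt (fun u => RInt (bern (S m)) 0 u) 0 (2 * PI) / (2 * PI)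
          = RInt (bern (S m)) 0 0 - RInt (fun u => RInt (bern (S m)) 0 u) 0 (2 * PI) / (2 * PI)).
  rewrite bern_mean, RInt_point. reflexivity.
Qed.

Lemma bern_jump k t :
  bern (S k) t - bern (S k) (t + 2 * PI) = - 2 * PI * t ^ k / INR (fact k).
Proof.
  revert t; induction k as [|k IH]; intro t.
  - simpl. field.
  - set (phi := fun t => bern (S (S k)) t - bern (S (S k)) (t + 2 * PI)
                        + 2 * PI / INR (fact (S k)) * t ^ S k).
    assert (Hfact : INR (fact (S k)) = INR (S k) * INR (fact k))
      by (rewrite fact_simpl, mult_INR; reflexivity).
    assert (Hd : forall z, is_derive phi z 0).
    { intro z. unfold phi.
      assert (Hder : is_derive (fun t => (bern (S (S k)) t - bern (S (S k)) (t + 2 * PI))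
                                       + 2 * PI / INR (fact (S k)) * t ^ S k) z
                       ((bern (S k) z - bern (S k) (z + 2 * PI))
                        + 2 * PI / INR (fact (S k)) * (INR (S k) * 1 * z ^ pred (S k)))).
      { apply (is_derive_plus (fun t => bern (S (S k)) t - bern (S (S k)) (t + 2 * PI))).
        - apply (is_derive_minus (bern (S (S k)))); [apply bern_derive|].
          apply is_derive_shift, bern_derive.
        - apply is_derive_scal, is_derive_pow, is_derive_Reals, derivable_pt_lim_id. }
      rewrite IH in Hder. simpl pred in Hder.
      replace (- 2 * PI * z ^ k / INR (fact k)
               + 2 * PI / INR (fact (S k)) * (INR (S k) * 1 * z ^ k)) with 0 in Hder.
      + exact Hder.
      + rewrite Hfact. field. split; [apply INR_fact_neq_0 | apply not_0_INR; lia]. }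
    pose proof (constant_of_derive_zero phi t Hd) as E. unfold phi in E.
    rewrite Rplus_0_l, bern_periodic_ends, pow_i, Rmult_0_r in E by lia.
    unfold Rdiv in *. lra.
Qed.

Lemma bern2_lipschitz u v :
  0 <= u <= v -> v <= 2 * PI -> Rabs (bern 2 v - bern 2 u) <= PI * (v - u).
Proof.
  intros Hu Hv. apply (abs_sub_le_of_derive_bound _ (bern 1)); [apply bern_derive | lra |].
  intros z Hz. simpl. apply Rabs_le. lra.
Qed.

Definition bern_chain (M j : nat) (t : R) : R := if Nat.leb j M then bern (M - j) t else 0.

Lemma bern_chain_deriv_chain M : deriv_chain (bern_chain M).
Proof.
  intros j t. unfold bern_chain.
  destruct (Nat.leb j M) eqn:E1; destruct (Nat.leb (S j) M) eqn:E2.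
  - apply Nat.leb_le in E2. replace (M - j)%nat with (S (M - S j)) by lia. apply bern_derive.
  - apply Nat.leb_le in E1. apply Nat.leb_gt in E2. replace (M - j)%nat with 0%nat by lia.
    apply is_derive_Reals, derivable_pt_lim_const.
  - apply Nat.leb_gt in E1. apply Nat.leb_le in E2. lia.
  - apply is_derive_Reals, derivable_pt_lim_const.
Qed.

Lemma bern_chain_0 M t : bern_chain M 0 t = bern M t.
Proof. unfold bern_chain. simpl. rewrite Nat.sub_0_r. reflexivity. Qed.

Lemma bern_chain_top M t : bern_chain M M t = 1.
Proof. unfold bern_chain. rewrite Nat.leb_refl, Nat.sub_diag. reflexivity. Qed.

(* The M-th derivative of bern M is 1. *)
Lemma fdiff_bern_piece M h x s :
  0 < h -> fdiff h M (fun z => -(1/2) * bern M (z + s)) x = -(1/2) * h ^ M.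
Proof.
  intro Hh.
  rewrite (fdiff_ext M h _ (fun z => -(1/2) * bern_chain M 0 (z + s)))
    by (intro z; rewrite bern_chain_0; reflexivity).
  destruct (fdiff_mean_value M h (fun j z => -(1/2) * bern_chain M j (z + s)) x
              (deriv_chain_scal_shift _ _ _ (bern_chain_deriv_chain M)) Hh) as [xi [_ ->]].
  rewrite bern_chain_top. ring.
Qed.

(** * Periodic Bernoulli functions *)

(* [knot c x] is the largest element of c + 2 pi Z not exceeding x
   ([Int_part] is the floor function). *)
Definition knot (c x : R) : R := c + 2 * PI * IZR (Int_part ((x - c) / (2 * PI))).

Definition phase (c x : R) : R := x - knot c x.

Lemma Int_part_unique r z : IZR z <= r < IZR z + 1 -> Int_part r = z.
Proof.
  unfold Int_part. intro H.
  assert (E : (z + 1)%Z = up r) by (apply tech_up; rewrite plus_IZR; simpl; lra).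
  lia.
Qed.

Lemma knot_spec c x : knot c x <= x < knot c x + 2 * PI.
Proof.
  unfold knot. pose proof PI_RGT_0.
  destruct (base_Int_part ((x - c) / (2 * PI))) as [H1 H2].
  set (z := IZR (Int_part ((x - c) / (2 * PI)))) in *.
  assert (E : x - c = 2 * PI * ((x - c) / (2 * PI))) by (field; lra).
  split; nra.
Qed.

Lemma knot_eq c j x :
  c + 2 * PI * IZR j <= x < c + 2 * PI * IZR j + 2 * PI -> knot c x = c + 2 * PI * IZR j.
Proof.
  intro Hx. unfold knot. pose proof PI_RGT_0.
  rewrite (Int_part_unique _ j); [reflexivity|].
  replace ((x - c) / (2 * PI)) with (IZR j + (x - (c + 2 * PI * IZR j)) / (2 * PI))
    by (field; lra).
  set (u := (x - (c + 2 * PI * IZR j)) / (2 * PI)).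
  assert (Eu : x - (c + 2 * PI * IZR j) = 2 * PI * u) by (unfold u; field; lra).
  assert (0 <= u < 1) by nra.
  lra.
Qed.

Lemma knot_idem c x : knot c (knot c x) = knot c x.
Proof.
  apply knot_eq. fold (knot c x). pose proof PI_RGT_0. lra.
Qed.

Lemma knot_shift c x : knot c (x + 2 * PI) = knot c x + 2 * PI.
Proof.
  pose proof (knot_spec c x).
  replace (knot c x + 2 * PI) with (c + 2 * PI * IZR (Int_part ((x - c) / (2 * PI)) + 1))
    by (rewrite plus_IZR; unfold knot; ring).
  apply knot_eq. rewrite plus_IZR. fold (knot c x). unfold knot in *. lra.
Qed.

Lemma knot_base c : knot c c = c.
Proof.
  rewrite (knot_eq c 0); [ring|]. pose proof PI_RGT_0. simpl. lra.
Qed.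

Lemma knot_base_prev c : knot c (c - 2 * PI) = c - 2 * PI.
Proof.
  rewrite (knot_eq c (-1)); [simpl; ring|]. pose proof PI_RGT_0. simpl. lra.
Qed.

Lemma knots_null c : null_set (fun x => knot c x = x).
Proof.
  apply (null_set_of_sequence _ (fun n => c + 2 * PI * IZR (int_of_nat n))).
  intros x Hx. destruct (int_of_nat_surj (Int_part ((x - c) / (2 * PI)))) as [n Hn].
  exists n. rewrite Hn. rewrite <- Hx at 1. reflexivity.
Qed.

Lemma phase_periodic c x : phase c (x + 2 * PI) = phase c x.
Proof. unfold phase. rewrite knot_shift. ring. Qed.

Lemma phase_range c x : 0 <= phase c x < 2 * PI.
Proof. unfold phase. pose proof (knot_spec c x). lra. Qed.

Lemma phase_right c x0 x :
  knot c x0 = x0 -> x0 <= x < x0 + 2 * PI -> phase c x = x - x0.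
Proof.
  intros Hk Hx. unfold phase. f_equal.
  unfold knot at 1 in Hk. rewrite <- Hk in Hx |- *. apply knot_eq. exact Hx.
Qed.

Lemma phase_left c x0 x :
  knot c x0 = x0 -> x0 - 2 * PI <= x < x0 -> phase c x = x - x0 + 2 * PI.
Proof.
  intros Hk Hx. rewrite <- phase_periodic, (phase_right c x0); [ring | exact Hk | lra].
Qed.

Lemma knot_of_piece c x0 z : knot c x0 = x0 -> x0 < z < x0 + 2 * PI -> knot c z = x0.
Proof.
  intros Hk Hz. pose proof (phase_right c x0 z Hk ltac:(lra)) as E.
  unfold phase in E. lra.
Qed.

Definition pbern (c : R) (N : nat) (x : R) : R := bern N (phase c x).

Lemma pbern_periodic c N x : pbern c N (x + 2 * PI) = pbern c N x.
Proof. unfold pbern. rewrite phase_periodic. reflexivity. Qed.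

Lemma pbern_right c N x0 x :
  knot c x0 = x0 -> x0 <= x < x0 + 2 * PI -> pbern c N x = bern N (x + - x0).
Proof. intros. unfold pbern. rewrite (phase_right c x0 x); auto. Qed.

Lemma pbern_left c N x0 x :
  knot c x0 = x0 -> x0 - 2 * PI <= x < x0 -> pbern c N x = bern N (x + (- x0 + 2 * PI)).
Proof.
  intros. unfold pbern. rewrite (phase_left c x0 x) by auto. f_equal. ring.
Qed.

Lemma pbern_derive_off_knot c N x :
  knot c x < x -> is_derive (pbern c (S N)) x (pbern c N x).
Proof.
  intro Hx. set (x0 := knot c x). pose proof (knot_spec c x) as Hs. fold x0 in Hs, Hx.
  assert (Hk : knot c x0 = x0) by apply knot_idem.
  apply (is_derive_ext_loc (fun z => bern (S N) (z + - x0))).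
  - apply (locally_interval _ x x0 (x0 + 2 * PI)); simpl; [lra | lra |].
    intros z Hz1 Hz2. symmetry. apply pbern_right; [exact Hk | lra].
  - rewrite (pbern_right c N x0 x Hk) by lra. apply is_derive_shift, bern_derive.
Qed.

(* At a knot the two polynomial pieces of pbern c (M+3) have the common derivative
   value bern (M+2) 0 = bern (M+2) (2 pi), so they glue differentiably. *)
Lemma pbern_derive_at_knot c M x :
  knot c x = x -> is_derive (pbern c (S (S (S M)))) x (pbern c (S (S M)) x).
Proof.
  intro Hk. pose proof PI_RGT_0.
  assert (Hval : pbern c (S (S M)) x = bern (S (S M)) 0)
    by (rewrite (pbern_right c _ x x Hk) by lra; f_equal; ring).
  apply (is_derive_glue _ (fun z => bern (S (S (S M))) (z + (- x + 2 * PI)))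
                          (fun z => bern (S (S (S M))) (z + - x)) x _ (2 * PI)); [lra | | | | |].
  - intros z Hz. apply pbern_left; [exact Hk | lra].
  - intros z Hz. apply pbern_right; [exact Hk | lra].
  - rewrite (pbern_right c _ x x Hk) by lra.
    replace (x + (- x + 2 * PI)) with (2 * PI) by ring. replace (x + - x) with 0 by ring.
    apply bern_periodic_ends.
  - apply is_derive_shift. rewrite Hval, <- bern_periodic_ends.
    replace (x + (- x + 2 * PI)) with (2 * PI) by ring. apply bern_derive.
  - apply is_derive_shift. rewrite Hval. replace (x + - x) with 0 by ring. apply bern_derive.
Qed.

Lemma pbern_derive c N x :
  (3 <= N)%nat -> is_derive (pbern c N) x (pbern c (pred N) x).
Proof.
  intro HN. destruct N as [|[|[|M]]]; try lia. simpl pred.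
  pose proof (knot_spec c x). destruct (Req_dec (knot c x) x) as [E|E].
  - apply pbern_derive_at_knot, E.
  - apply pbern_derive_off_knot. lra.
Qed.

Lemma pbern_continuous_off_knot c N x : knot c x < x -> continuous (pbern c (S N)) x.
Proof.
  intro Hx. apply (ex_derive_continuous (pbern c (S N))). eexists.
  apply pbern_derive_off_knot, Hx.
Qed.

Lemma pbern2_lipschitz c a b :
  a <= b < a + 2 * PI -> Rabs (pbern c 2 b - pbern c 2 a) <= PI * (b - a).
Proof.
  intro Hab. pose proof PI_RGT_0.
  set (x0 := knot c b). pose proof (knot_spec c b) as Hb. fold x0 in Hb.
  assert (Hk : knot c x0 = x0) by apply knot_idem.
  destruct (Rle_or_lt x0 a) as [Hle|Hlt].
  - rewrite (pbern_right c 2 x0 a), (pbern_right c 2 x0 b) by (auto; lra).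
    replace (b - a) with (b + - x0 - (a + - x0)) by ring.
    apply bern2_lipschitz; lra.
  - assert (Hmid : pbern c 2 x0 = bern 2 (x0 + (- x0 + 2 * PI))).
    { rewrite (pbern_right c 2 x0 x0 Hk) by lra.
      replace (x0 + (- x0 + 2 * PI)) with (2 * PI) by ring.
      replace (x0 + - x0) with 0 by ring. symmetry. apply bern_periodic_ends. }
    assert (Hright : Rabs (pbern c 2 b - pbern c 2 x0) <= PI * (b - x0)).
    { rewrite (pbern_right c 2 x0 b), (pbern_right c 2 x0 x0) by (auto; lra).
      replace (b - x0) with (b + - x0 - (x0 + - x0)) by ring.
      apply bern2_lipschitz; lra. }
    assert (Hleft : Rabs (pbern c 2 x0 - pbern c 2 a) <= PI * (x0 - a)).
    { rewrite Hmid, (pbern_left c 2 x0 a) by (auto; lra).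
      replace (x0 - a) with (x0 + (- x0 + 2 * PI) - (a + (- x0 + 2 * PI))) by ring.
      apply bern2_lipschitz; lra. }
    replace (pbern c 2 b - pbern c 2 a)
      with ((pbern c 2 b - pbern c 2 x0) + (pbern c 2 x0 - pbern c 2 a)) by ring.
    eapply Rle_trans; [apply Rabs_triang | lra].
Qed.

Lemma pbern2_continuous c x : continuous (pbern c 2) x.
Proof.
  pose proof PI_RGT_0.
  apply (continuous_of_lipschitz_short _ PI (2 * PI)); [lra | lra |].
  apply pbern2_lipschitz.
Qed.

(** * The extremal spline *)

(* The extremal function for q = p + 3: a spline of degree q - 1 with knots c + 2 pi Z. *)
Definition spline (p : nat) (c x : R) : R := -(1/2) * pbern c (S (S p)) x.

Lemma spline_periodic p c x : spline p c (x + 2 * PI) = spline p c x.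
Proof. unfold spline. rewrite pbern_periodic. reflexivity. Qed.

Lemma spline_continuous p c x : continuous (spline p c) x.
Proof.
  apply (continuous_scal_r (-(1/2)) (pbern c (S (S p)))). destruct p as [|p].
  - apply pbern2_continuous.
  - apply (ex_derive_continuous (pbern c (S (S (S p))))). eexists. apply pbern_derive. lia.
Qed.

Lemma spline_Derive_n p c j x :
  (j <= p)%nat -> Derive_n (spline p c) j x = -(1/2) * pbern c (S (S p) - j) x.
Proof.
  revert x; induction j as [|j IH]; intros x Hj; [reflexivity|].
  cbn [Derive_n]. rewrite (Derive_ext _ (fun z => -(1/2) * pbern c (S (S p) - j) z) x)
    by (intro t; apply IH; lia).
  apply is_derive_unique, is_derive_scal.
  replace (S (S p) - S j)%nat with (pred (S (S p) - j)) by lia.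
  apply pbern_derive. lia.
Qed.

Lemma spline_ex_derive_n p c j x : (j <= p)%nat -> ex_derive_n (spline p c) j x.
Proof.
  intro Hj. destruct j as [|j]; [exact I|]. cbn [ex_derive_n].
  exists (-(1/2) * pbern c (pred (S (S p) - j)) x).
  apply (is_derive_ext (fun z => -(1/2) * pbern c (S (S p) - j) z)).
  - intro t. symmetry. apply spline_Derive_n. lia.
  - apply is_derive_scal, pbern_derive. lia.
Qed.

Lemma spline_is_derive_top p c x :
  knot c x < x -> is_derive (Derive_n (spline p c) p) x (-(1/2) * pbern c 1 x).
Proof.
  intro Hx. apply (is_derive_ext (fun z => -(1/2) * pbern c 2 z)).
  - intro t. rewrite spline_Derive_n by lia. do 2 f_equal. lia.
  - apply is_derive_scal, pbern_derive_off_knot, Hx.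
Qed.

Lemma spline_Derive_top p c x :
  knot c x < x -> Derive_n (spline p c) (S p) x = -(1/2) * pbern c 1 x.
Proof. intro Hx. apply is_derive_unique, spline_is_derive_top, Hx. Qed.

Lemma spline_Derive_top_affine p c x0 z :
  knot c x0 = x0 -> x0 < z < x0 + 2 * PI ->
  Derive_n (spline p c) (S p) z = -(1/2) * (z - x0 - PI).
Proof.
  intros Hk Hz. rewrite spline_Derive_top by (rewrite (knot_of_piece c x0 z Hk Hz); lra).
  rewrite (pbern_right c 1 x0 z Hk) by lra. reflexivity.
Qed.

Lemma spline_Derive_n_continuous p c k x :
  (k <= S p)%nat -> knot c x < x -> continuous (Derive_n (spline p c) k) x.
Proof.
  intros Hk Hx. pose proof (knot_spec c x) as Hs.
  destruct (Nat.eq_dec k (S p)) as [->|Hne].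
  - apply (continuous_ext_loc _ (fun z => -(1/2) * pbern c 1 z)).
    + apply (locally_interval _ x (knot c x) (knot c x + 2 * PI)); simpl; [lra | lra |].
      intros z Hz1 Hz2. symmetry. apply spline_Derive_top.
      rewrite (knot_of_piece c (knot c x) z (knot_idem c x)); lra.
    + apply (continuous_scal_r (-(1/2)) (pbern c 1)), pbern_continuous_off_knot, Hx.
  - apply (continuous_ext (fun z => -(1/2) * pbern c (S (S p - k)) z)).
    + intro t. rewrite spline_Derive_n by lia. do 2 f_equal. lia.
    + apply (continuous_scal_r (-(1/2)) (pbern c (S (S p - k)))), pbern_continuous_off_knot, Hx.
Qed.

Lemma spline_q_monotone p c sgn x0 a b :
  knot c x0 = x0 -> x0 <= a -> b <= x0 + 2 * PI ->
  q_monotone (S (S (S p))) (fun x => sgn * spline p c x) a b.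
Proof.
  intros Hk Ha Hb. unfold q_monotone. replace (S (S (S p)) - 2)%nat with (S p) by lia.
  split; [|split].
  - apply cont_on_closed_of_continuous. intro x.
    apply (continuous_scal_r sgn (spline p c)), spline_continuous.
  - intros k Hkp x Hx.
    assert (Hkx : knot c x < x) by (rewrite (knot_of_piece c x0 x Hk); lra).
    split.
    + apply ex_derive_n_scal_l. destruct (Nat.eq_dec k (S p)) as [->|Hne].
      * cbn [ex_derive_n]. eexists. apply spline_is_derive_top, Hkx.
      * apply spline_ex_derive_n. lia.
    + apply (continuous_ext (fun z => sgn * Derive_n (spline p c) k z)).
      * intro t. symmetry. apply Derive_n_scal_l.
      * apply (continuous_scal_r sgn (Derive_n (spline p c) k)), spline_Derive_n_continuous;
          [lia | exact Hkx].
  - apply (convex_open_affine _ (- sgn / 2) (sgn / 2 * (x0 + PI))). intros z Hz.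
    rewrite Derive_n_scal_l, (spline_Derive_top_affine p c x0) by (auto; lra). field.
Qed.

Lemma admissible_Y_antitone s y i j :
  admissible_Y s y -> (1 <= i)%nat -> (i <= j)%nat -> (j <= 2 * s)%nat -> y j <= y i.
Proof.
  intros Hy Hi Hij Hj. induction j as [|j IH]; [lia|].
  destruct (Nat.eq_dec i (S j)) as [->|Hne]; [lra|].
  assert (y j <= y i) by (apply IH; lia).
  specialize (Hy (S j) ltac:(lia)). unfold yext in Hy.
  replace (S j - 1)%nat with j in Hy by lia.
  destruct j as [|j]; [lia|]. simpl in Hy. lra.
Qed.

Lemma spline_Delta_q p s y :
  (1 <= s)%nat -> admissible_Y s y -> Delta_q (S (S (S p))) s y (spline p (y 1%nat)).
Proof.
  intros Hs Hy. pose proof PI_RGT_0. set (c := y 1%nat).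
  split; [split; [apply spline_continuous | apply spline_periodic]|].
  intros i Hi.
  pose proof (admissible_Y_antitone s y 1 (2 * s) Hy ltac:(lia) ltac:(lia) ltac:(lia)).
  assert (Hy1 : y 1%nat < y (2 * s)%nat + 2 * PI) by apply (Hy 1%nat ltac:(lia)).
  destruct i as [|[|i]]; [lia| |].
  - unfold yext; simpl. apply (spline_q_monotone p c _ c); [apply knot_base | unfold c; lra |].
    replace (s + (s + 0))%nat with (2 * s)%nat by lia. unfold c. lra.
  - unfold yext. simpl Nat.eqb. cbv iota. replace (S (S i) - 1)%nat with (S i) by lia.
    pose proof (admissible_Y_antitone s y (S (S i)) (2 * s) Hy ltac:(lia) ltac:(lia) ltac:(lia)).
    pose proof (admissible_Y_antitone s y 1 (S i) Hy ltac:(lia) ltac:(lia) ltac:(lia)).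
    apply (spline_q_monotone p c _ (c - 2 * PI)); [apply knot_base_prev | | ]; unfold c; lra.
Qed.

Lemma spline_W_class p c : W_class (S p) (spline p c).
Proof.
  pose proof PI_RGT_0. pose proof PI_4.
  assert (Htop : forall z, Derive_n (spline p c) p z = -(1/2) * pbern c 2 z)
    by (intro z; rewrite spline_Derive_n by lia; do 2 f_equal; lia).
  unfold W_class. replace (S p - 1)%nat with p by lia.
  split; [|split; [|split]].
  - apply spline_periodic.
  - intros k Hk x. apply spline_ex_derive_n, Hk.
  - apply (loc_abs_continuous_of_lipschitz_short _ (PI / 2) (2 * PI)); [lra | lra |].
    intros a b Hab. rewrite !Htop.
    replace (-(1/2) * pbern c 2 b - -(1/2) * pbern c 2 a)
      with (-(1/2) * (pbern c 2 b - pbern c 2 a)) by ring.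
    rewrite Rabs_mult, Rabs_left by lra.
    pose proof (pbern2_lipschitz c a b Hab). lra.
  - exists (fun x => knot c x = x). split; [apply knots_null|].
    intros x Hx. pose proof (knot_spec c x) as Hs.
    assert (Hlt : knot c x < x) by (destruct Hs as [[Hlt|Heq] _]; [exact Hlt | contradiction]).
    pose proof (spline_is_derive_top p c x Hlt) as D.
    split; [eexists; exact D|].
    rewrite (is_derive_unique _ _ _ D). unfold pbern. simpl.
    pose proof (phase_range c x). apply Rabs_le. lra.
Qed.

Lemma spline_fdiff_smooth p c x0 h x :
  knot c x0 = x0 -> 0 < h -> x0 <= x -> x + INR (S (S p)) * h < x0 + 2 * PI ->
  fdiff h (S (S p)) (spline p c) x = -(1/2) * h ^ S (S p).
Proof.
  intros Hk Hh Hx Hxh.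
  rewrite (fdiff_ext_nodes _ _ _ (fun z => -(1/2) * bern (S (S p)) (z + - x0))).
  - apply fdiff_bern_piece, Hh.
  - intros j Hj. pose proof (node_bounds x h j _ Hh Hj).
    unfold spline. rewrite (pbern_right c _ x0) by (auto; lra). reflexivity.
Qed.

(* Across a knot the spline differs from the left polynomial piece by the truncated
   power pi / (S p)! * (z - x0)_+^(S p) (this is bern_jump), whose difference only sees
   the last node. *)
Lemma spline_fdiff_across_knot p c x0 h x :
  knot c x0 = x0 -> 0 < h -> x0 - 2 * PI <= x ->
  x + INR (S p) * h < x0 <= x + INR (S (S p)) * h -> x + INR (S (S p)) * h < x0 + 2 * PI ->
  fdiff h (S (S p)) (spline p c) x =
  -(1/2) * h ^ S (S p) + PI / INR (fact (S p)) * (x + INR (S (S p)) * h - x0) ^ S p.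
Proof.
  intros Hk Hh Hx [Hbefore Hlast] Hend.
  set (u := fun z => if Rlt_dec z x0 then 0 else (z - x0) ^ S p).
  rewrite (fdiff_ext_nodes _ _ _ (fun z => -(1/2) * bern (S (S p)) (z + (- x0 + 2 * PI))
                                           + PI / INR (fact (S p)) * u z)).
  - rewrite fdiff_plus_scal, fdiff_bern_piece by exact Hh. rewrite fdiff_vanishing_nodes.
    + unfold u. destruct (Rlt_dec _ x0); [lra | reflexivity].
    + intros j Hj. unfold u. destruct (Rlt_dec _ x0) as [_|Hge]; [reflexivity|].
      exfalso. apply Hge. apply (Rle_lt_trans _ (x + INR (S p) * h)); [|exact Hbefore].
      apply Rplus_le_compat_l, Rmult_le_compat_r; [lra | apply le_INR; lia].
  - intros j Hj. pose proof (node_bounds x h j _ Hh Hj). unfold spline, u.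
    destruct (Rlt_dec (x + INR j * h) x0) as [Hleft|Hright].
    + rewrite (pbern_left c _ x0) by (auto; lra). ring.
    + rewrite (pbern_right c _ x0) by (auto; lra).
      pose proof (bern_jump (S p) (x + INR j * h + - x0)) as Hjump.
      replace (x + INR j * h + - x0 + 2 * PI) with (x + INR j * h + (- x0 + 2 * PI))
        in Hjump by ring.
      replace (x + INR j * h - x0) with (x + INR j * h + - x0) by ring.
      pose proof (INR_fact_neq_0 (S p)).
      apply (Rplus_eq_reg_r (1/2 * bern (S (S p)) (x + INR j * h + (- x0 + 2 * PI)))).
      unfold Rdiv in *. nra.
Qed.

Lemma sup_norm_bound g r : sup_norm g = Finite r -> forall z, Rabs (g z) <= r.
Proof.
  intros Hg z. destruct (Lub_Rbar_correct (fun r => exists x, r = Rabs (g x))) as [Hub _].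
  unfold sup_norm in Hg. rewrite Hg in Hub. apply Hub. exists z. reflexivity.
Qed.

(* k-th differences amplify uniform errors by at most 2^k. *)
Lemma fdiff_gap_le_sup k h (F T : R -> R) x xl xr G r :
  (forall z, Rabs (F z - T z) <= r) ->
  fdiff h k T x <= Rmax (fdiff h k T xl) (fdiff h k T xr) ->
  fdiff h k F xl = fdiff h k F xr -> fdiff h k F x = fdiff h k F xl + G ->
  G / 2 ^ S k <= r.
Proof.
  intros Hr Hmax Hside Hmid.
  assert (Hsplit : forall z, fdiff h k F z = fdiff h k T z + 1 * fdiff h k (fun u => F u - T u) z).
  { intro z. rewrite <- fdiff_plus_scal. apply fdiff_ext. intro u. ring. }
  assert (Herr : forall z, Rabs (fdiff h k (fun u => F u - T u) z) <= 2 ^ k * r)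
    by (intro z; apply fdiff_abs_le, Hr).
  pose proof (Herr x) as Ex. pose proof (Herr xl) as El. pose proof (Herr xr) as Er.
  apply Rabs_le_between in Ex, El, Er.
  rewrite !Hsplit in Hside, Hmid.
  assert (HG : G <= 2 * 2 ^ k * r) by (revert Hmax; apply Rmax_case; intro; lra).
  pose proof (pow_lt 2 (S k) ltac:(lra)).
  apply (Rmult_le_reg_r (2 ^ S k)); [lra|].
  unfold Rdiv. rewrite Rmult_assoc, Rinv_l, Rmult_1_r by lra. simpl. lra.
Qed.

Lemma trig_Delta_q_fdiff_le_max p s y n T h x :
  (1 <= s)%nat -> trig_poly n T -> Delta_q (S (S (S p))) s y T -> 0 < h ->
  y 2%nat <= x - INR (S (S p)) * h -> x <= y 1%nat <= x + INR (S (S p)) * h ->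
  x + 2 * (INR (S (S p)) * h) <= y (2 * s)%nat + 2 * PI ->
  fdiff h (S (S p)) T x <=
  Rmax (fdiff h (S (S p)) T (x - INR (S (S p)) * h))
       (fdiff h (S (S p)) T (x + INR (S (S p)) * h)).
Proof.
  intros Hs HT [_ HD] Hh Ha [Hxc Hcx] Hb.
  destruct (trig_poly_deriv_chain n T HT) as [Ts [HTs HT0]].
  assert (HDn : forall sg k z, Derive_n (fun x => sg * T x) k z = sg * Ts k z).
  { intros sg k z. rewrite Derive_n_scal_l, (Derive_n_ext T (Ts 0%nat))
      by (intro; symmetry; apply HT0).
    rewrite deriv_chain_Derive_n by exact HTs. reflexivity. }
  assert (Hconv : convex_open (Ts (S p)) (y 1%nat) (y (2 * s)%nat + 2 * PI)).
  { destruct (HD 1%nat ltac:(lia)) as [_ [_ Hc]].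
    eapply convex_open_ext; [|exact Hc]. intro z. rewrite HDn. simpl. ring. }
  assert (Hconc : convex_open (fun z => - Ts (S p) z) (y 2%nat) (y 1%nat)).
  { destruct (HD 2%nat ltac:(lia)) as [_ [_ Hc]].
    eapply convex_open_ext; [|exact Hc]. intro z. rewrite HDn. simpl. ring. }
  rewrite !(fdiff_ext _ h T (Ts 0%nat)) by (intro; symmetry; apply HT0).
  apply (fdiff_le_max_of_concave_convex (S p) Ts (y 2%nat) (y 1%nat) (y (2 * s)%nat + 2 * PI));
    assumption.
Qed.

Lemma admissible_Y_first_gaps s y :
  (1 <= s)%nat -> admissible_Y s y ->
  y 1%nat - 2 * PI < y 2%nat < y 1%nat /\
  y 1%nat < y (2 * s)%nat + 2 * PI < y 1%nat + 2 * PI.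
Proof.
  intros Hs Hy.
  assert (H1 : y 1%nat < y (2 * s)%nat + 2 * PI) by apply (Hy 1%nat ltac:(lia)).
  assert (H2 : y 2%nat < y 1%nat) by apply (Hy 2%nat ltac:(lia)).
  pose proof (admissible_Y_antitone s y 2 (2 * s) Hy ltac:(lia) ltac:(lia) ltac:(lia)).
  lra.
Qed.

Lemma difference_step_exists (M : nat) a c b :
  a < c < b -> exists h, 0 < h /\
    a <= c + h / 2 - 2 * (INR M * h) /\ c + h / 2 + INR M * h <= b.
Proof.
  intro Hacb. pose proof (pos_INR M).
  set (d := Rmin (c - a) (b - c)).
  assert (Hd : 0 < d /\ d <= c - a /\ d <= b - c)
    by (unfold d; split; [apply Rmin_case; lra | split; [apply Rmin_l | apply Rmin_r]]).
  exists (d / (2 * INR M + 2)).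
  assert (Hh : d = (2 * INR M + 2) * (d / (2 * INR M + 2))) by (field; lra).
  assert (0 < d / (2 * INR M + 2)) by (apply Rdiv_lt_0_compat; lra).
  nra.
Qed.

Theorem theorem1p3 :
  forall (q s : nat) (y : nat -> R),
    (3 <= q)%nat -> (1 <= s)%nat -> admissible_Y s y ->
    exists f : R -> R,
      Delta_q q s y f /\ W_class (q - 2) f /\
      exists C : R, 0 < C /\
        forall n : nat, (1 <= n)%nat -> Rbar_le (Finite C) (E_nq n q s y f).
Proof.
  intros q s y Hq Hs Hy. destruct q as [|[|[|p]]]; try lia.
  destruct (admissible_Y_first_gaps s y Hs Hy) as [[Hac Hca] [Hcb Hbc]].
  set (c := y 1%nat) in *. set (M := S (S p)).
  destruct (difference_step_exists M (y 2%nat) c (y (2 * s)%nat + 2 * PI))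
    as [h [Hh [Hleft Hright]]]; [lra|].
  set (w := INR M * h) in *. set (x := c + h / 2 - w).
  assert (Hw : 2 * h <= w) by (unfold w, M; rewrite !S_INR; pose proof (pos_INR p); nra).
  assert (HwS : x + INR (S p) * h = c - h / 2)
    by (unfold x, w, M; rewrite (S_INR (S p)); field).
  set (G := PI / INR (fact (S p)) * (h / 2) ^ S p).
  exists (spline p c). split; [apply spline_Delta_q; assumption|].
  split; [apply spline_W_class|].
  exists (G / 2 ^ S M). split.
  { pose proof PI_RGT_0. pose proof (INR_fact_lt_0 (S p)). unfold G.
    apply Rdiv_lt_0_compat; [apply Rmult_lt_0_compat; [apply Rdiv_lt_0_compat|] |];
      try apply pow_lt; lra. }
  intros n _. apply (proj2 (Glb_Rbar_correct _)). intros r [T [HT [HD Hsup]]]. simpl.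
  apply (fdiff_gap_le_sup M h (spline p c) T x (x - w) (x + w)).
  - apply sup_norm_bound, Hsup.
  - apply (trig_Delta_q_fdiff_le_max p s y n T h x); auto; fold c M w; unfold x; lra.
  - rewrite (spline_fdiff_smooth p c (c - 2 * PI)), (spline_fdiff_smooth p c c);
      try apply knot_base; try apply knot_base_prev; fold M w; unfold x; lra.
  - rewrite (spline_fdiff_across_knot p c c), (spline_fdiff_smooth p c (c - 2 * PI));
      try apply knot_base; try apply knot_base_prev; fold M w; unfold x in *; try lra.
    replace (c + h / 2 - w + w - c) with (h / 2) by ring. reflexivity.
Qed.
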